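(* Let $i\geq1$ and $j\ge0$. The map $\varphi_i$ carries $M_i(j)$ isomorphically onto $N_{i-1}(\lfloor j/p\rfloor)$.
   Context: Let $p$ be an odd prime. In the mod $p$ dual Steenrod algebra let $\zeta_n,\overline{\tau}_n$ be the conjugates of Milnor's $\xi_n,\tau_n$ ($\zeta_0=1$). For $n\ge0$ let $(A/\!/E(n))_*=\mathbb{F}_p[\zeta_1,\zeta_2,\ldots]\otimes E(\overline{\tau}_{n+1},\overline{\tau}_{n+2},\ldots)$, a comodule over $E(n)_*=E(\overline{\tau}_0,\ldots,\overline{\tau}_n)$. Weight: $\mathrm{wt}(\zeta_k)=\mathrm{wt}(\overline{\tau}_k)=p^k$, additive on products of monomials. $M_i(j)$ is the span of the monomials of $(A/\!/E(i))_*$ of weight exactly $pj$; $N_{i-1}(m)$ is the span of the monomials of $(A/\!/E(i-1))_*$ of weight $\le pm$. $\varphi_i\colon(A/\!/E(i))_*\to(A/\!/E(i-1))_*$ is the algebra map with $\zeta_k\mapsto\zeta_{k-1}$ ($k\ge1$) and $\overline{\tau}_j\mapsto\overline{\tau}_{j-1}$ ($j\ge i+1$); it is a map of ungraded $E(i)_*$-comodules. *)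

From HB Require Import structures.
From mathcomp Require Import all_boot all_order all_algebra.
From mathcomp Require Import finmap.
From mathcomp Require Import monalg.

Set Implicit Arguments.
Unset Strict Implicit.
Unset Printing Implicit Defensive.

Import GRing.Theory.
Local Open Scope fset_scope.
Local Open Scope ring_scope.

(* Monomials of the (quotient of the) mod p dual Steenrod algebra            *)
(*   F_p[zeta_1, zeta_2, ...] (x) E(taubar_0, taubar_1, ...).                 *)
(* A monomial  zeta_1^{a_1} zeta_2^{a_2} ... taubar_{s_1} ... taubar_{s_r}    *)
(* (s_1 < ... < s_r) is encoded as the pair (a, S) where                      *)
(*   a : {fsfun nat -> nat with 0},  a k = exponent of zeta_(k+1)             *)
(*   (the shift by one because zeta_0 = 1 is not a generator), and            *)
(*   S : {fset nat}, the set of indices of the exterior generators taubar_s.  *)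
Definition mon := ({fsfun nat -> nat with 0%N} * {fset nat})%type.

Definition weight (p : nat) (m : mon) : nat :=
  (\sum_(k <- finsupp m.1) m.1 k * p ^ k.+1 + \sum_(s <- m.2) p ^ s)%N.

(* m is a monomial of (A//E(n))_* = F_p[zeta_1,...] (x) E(taubar_(n+1),...) *)
Definition in_AE (n : nat) (m : mon) : bool := all (fun s => n < s)%N m.2.

(* The ambient F_p-vector space with basis all monomials; (A//E(n))_* and the
   spaces M_i(j), N_{i-1}(m) are spans of sets of basis monomials. *)
Definition vspace (p : nat) := {malg 'F_p[mon]}.

Definition in_span (p : nat) (P : pred mon) (g : vspace p) : bool :=
  all P (msupp g).

Definition M_ (p i j : nat) : pred (vspace p) :=
  in_span (fun m => in_AE i m && (weight p m == p * j)%N).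

Definition N_ (p n m : nat) : pred (vspace p) :=
  in_span (fun mo => in_AE n mo && (weight p mo <= p * m)%N).

(* phi on monomials: zeta_k |-> zeta_(k-1) (zeta_0 = 1), taubar_j |-> taubar_(j-1).
   Being an algebra map that sends generators to generators (or 1) and
   preserves the order of the exterior generators, it sends the monomial
   (a, S) to the monomial (a', S') with a' k = a (k+1), S' = {s-1 | s in S}.
   (Only its values on monomials of (A//E(i))_*, i >= 1, matter.) *)
Definition phi_mon (m : mon) : mon :=
  ([fsfun k in [fset k'.-1 | k' in finsupp m.1] => m.1 k.+1],
   [fset s.-1 | s in m.2]).

Definition phi (p : nat) (g : vspace p) : vspace p :=
  \sum_(m <- msupp g) << g@_m *g phi_mon m >>.

Arguments M_ p i j : clear implicits.
Arguments N_ p n m : clear implicits.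

From HB Require Import structures.
From mathcomp Require Import all_boot all_order all_algebra.
From mathcomp Require Import finmap.
From mathcomp Require Import monalg.

(* A monomial m without a taubar_0 factor is zeta_1^e times the copy of phi m
   with every index raised by one, so m is determined by (e, phi m) and
   wt(m) = p (e + wt(phi m)). On M_i(j) this forces e = j - wt(phi m), so phi is
   injective there. As i >= 1, phi m again has no taubar_0 factor, so wt(phi m)
   is a multiple of p that is at most j, i.e. at most p (j/p). Conversely each n
   in N_{i-1}(j/p) has weight at most j and is phi of zeta_1^(j - wt n) times
   the index-raised copy of n, a monomial of weight p j. *)

Set Implicit Arguments.
Unset Strict Implicit.
Unset Printing Implicit Defensive.

Import GRing.Theory.
Local Open Scope fset_scope.

Section MalgMap.
Variable G : zmodType.
Local Open Scope ring_scope.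

Section Map.
Variables K K' : choiceType.
Implicit Types g : {malg G[K]}.

Definition malg_map (f : K -> K') g : {malg G[K']} :=
  \sum_(k <- msupp g) << g@_k *g f k >>.

Lemma malg_mapEw (f : K -> K') (d : {fset K}) g : msupp g `<=` d ->
  malg_map f g = \sum_(k <- d) << g@_k *g f k >>.
Proof.
move=> le_gd; apply: big_fset_incl => // k _ /mcoeff_outdom ->.
exact: monalgU0.
Qed.

Lemma malg_map0 (f : K -> K') : malg_map f 0 = 0.
Proof. by rewrite /malg_map msupp0 big_seq_fset0. Qed.

Lemma malg_mapD (f : K -> K') : {morph malg_map f : g1 g2 / g1 + g2}.
Proof.
move=> g1 g2; pose d := msupp g1 `|` msupp g2.
rewrite !(@malg_mapEw f d) ?fsubsetUl ?fsubsetUr ?msuppD_le // -big_split.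
by apply: eq_bigr => k _; rewrite mcoeffD monalgUD.
Qed.

Lemma malg_mapU (f : K -> K') (c : G) k :
  malg_map f << c *g k >> = << c *g f k >>.
Proof. by rewrite (malg_mapEw _ msuppU_le) big_seq_fset1 mcoeffUU. Qed.

Lemma mcoeff_malg_map (f : K -> K') g k' :
  (malg_map f g)@_k' = \sum_(k <- msupp g | f k == k') g@_k.
Proof.
rewrite /malg_map raddf_sum [RHS]big_mkcond; apply: eq_bigr => k _ /=.
by rewrite mcoeffU; case: (f k == k').
Qed.

Lemma all_msupp_malg_map (f : K -> K') (P : pred K') g :
  {in msupp g, forall k, P (f k)} -> all P (msupp (malg_map f g)).
Proof.
move=> Pf; apply/allP => k'; rewrite -mcoeff_neq0 mcoeff_malg_map.
apply: contraR => NPk'; rewrite big1_seq // => k /andP[/eqP fk kg].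
by move: NPk'; rewrite -fk Pf.
Qed.

Section InjectiveOn.
Variables (f : K -> K') (D : pred K).
Hypothesis f_inj : {in D &, injective f}.

Lemma mcoeff_malg_map_inj g k : all D (msupp g) -> D k ->
  (malg_map f g)@_(f k) = g@_k.
Proof.
move=> /allP Dg Dk; rewrite mcoeff_malg_map.
have [kg | kNg] := boolP (k \in msupp g).
  rewrite -big_filter (_ : filter _ _ = [:: k]) ?big_seq1 //.
  rewrite -(filter_pred1_uniq (fset_uniq _) kg); apply: eq_in_filter => k' k'g.
  by rewrite (inj_in_eq f_inj) //; apply: Dg.
rewrite mcoeff_outdom // big1_seq // => k' /andP[/eqP fk' k'g].
by move: kNg; rewrite -(f_inj (Dg _ k'g) Dk fk') k'g.
Qed.

Lemma malg_map_inj_in :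
  {in [pred g | all D (msupp g)] &, injective (malg_map f)}.
Proof.
move=> g1 g2 Dg1 Dg2 eq_fg; apply/malgP => k.
have [Dk | NDk] := boolP (D k).
  by rewrite -(mcoeff_malg_map_inj Dg1 Dk) eq_fg mcoeff_malg_map_inj.
have supp_D g : all D (msupp g) -> k \notin msupp g.
  by move=> /allP Dg; apply: contra NDk => /Dg.
by rewrite !mcoeff_outdom ?supp_D.
Qed.

End InjectiveOn.

End Map.

Lemma malg_map_comp (K K' K'' : choiceType) (f : K' -> K'') (s : K -> K')
    (g : {malg G[K]}) :
  malg_map f (malg_map s g) = malg_map (f \o s) g.
Proof.
rewrite [malg_map s g]/malg_map (big_morph _ (malg_mapD f) (malg_map0 f)).
by apply: eq_bigr => k _; rewrite malg_mapU.
Qed.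

Lemma malg_map_id_in (K : choiceType) (f : K -> K) (g : {malg G[K]}) :
  {in msupp g, f =1 id} -> malg_map f g = g.
Proof.
by move=> fid; rewrite [RHS]monalgE; apply: eq_big_seq => k /fid ->.
Qed.

End MalgMap.

(* zeta_1^e times [n] with every index raised by one *)
Definition lift_mon (e : nat) (n : mon) : mon :=
  ([fsfun k in 0 |` [fset k.+1 | k in finsupp n.1] =>
      if k is k'.+1 then n.1 k' else e],
   [fset s.+1 | s in n.2]).

Lemma lift_mon_exp0 e n : (lift_mon e n).1 0 = e.
Proof. by rewrite fsfun_fun fset1U1. Qed.

Lemma lift_mon_expS e n k : (lift_mon e n).1 k.+1 = n.1 k.
Proof.
rewrite fsfun_fun in_fset1U /=; case: imfsetP => [|nk] //.
by apply/esym/fsfun_dflt/negP => kn; apply: nk; exists k.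
Qed.

Lemma mem_lift_mon_ext e n s :
  (s \in (lift_mon e n).2) = if s is s'.+1 then s' \in n.2 else false.
Proof.
case: s => [|s]; first by apply/imfsetP => -[].
by rewrite mem_imfset //; apply: succn_inj.
Qed.

Lemma phi_mon_expE m k : (phi_mon m).1 k = m.1 k.+1.
Proof.
rewrite fsfun_fun; case: imfsetP => [|nk] //.
by apply/esym/fsfun_dflt/negP => km; apply: nk; exists k.+1.
Qed.

Lemma mem_phi_mon_ext m s : 0 \notin m.2 ->
  (s \in (phi_mon m).2) = (s.+1 \in m.2).
Proof.
move=> m0; apply/imfsetP/idP => [[[|s'] s'm ->] // | sm]; last by exists s.+1.
by rewrite s'm in m0.
Qed.

Lemma lift_monK e : cancel (lift_mon e) phi_mon.
Proof.
move=> [a S]; congr pair.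
  by apply/fsfunP => k; rewrite phi_mon_expE lift_mon_expS.
by apply/fsetP => s; rewrite mem_phi_mon_ext mem_lift_mon_ext.
Qed.

Lemma phi_monK (m : mon) : 0 \notin m.2 -> lift_mon (m.1 0) (phi_mon m) = m.
Proof.
case: m => a S /= m0; congr pair.
  by apply/fsfunP => -[|k]; rewrite ?lift_mon_exp0 // lift_mon_expS phi_mon_expE.
apply/fsetP => -[|s]; rewrite (mem_lift_mon_ext (a 0)) ?(negbTE m0) //.
by rewrite mem_phi_mon_ext.
Qed.

Lemma weight_lift_mon p e n :
  weight p (lift_mon e n) = p * (e + weight p n).
Proof.
have sum_succ (S : {fset nat}) (F : nat -> nat) :
    \sum_(k <- [fset k.+1 | k in S]) F k = \sum_(k <- S) F k.+1.
  by rewrite big_imfset //; move=> ? ? _ _ /succn_inj.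
have zero_new : 0 \notin [fset k.+1 | k in finsupp n.1].
  by apply/imfsetP => -[].
have supp_sub :
    finsupp (lift_mon e n).1 `<=` 0 |` [fset k.+1 | k in finsupp n.1].
  apply/fsubsetP => -[|k]; rewrite ?fset1U1 // mem_finsupp lift_mon_expS => nk.
  by rewrite in_fset1U /= mem_imfset ?mem_finsupp //; apply: succn_inj.
rewrite /weight (big_fset_incl _ supp_sub); last by move=> k _ /fsfun_dflt ->.
rewrite big_fsetU1 // !sum_succ lift_mon_exp0.
rewrite !mulnDr !big_distrr /= addnA mulnC expn1; congr (_ + _ + _)%N.
  by apply: eq_bigr => k _; rewrite lift_mon_expS expnS mulnCA.
by apply: eq_bigr => k _; rewrite expnS.
Qed.

Lemma weight_phi_mon p m : 0 \notin m.2 ->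
  weight p m = p * (m.1 0 + weight p (phi_mon m)).
Proof. by move=> m0; rewrite -{1}(phi_monK m0) weight_lift_mon. Qed.

Lemma in_AE_ext0 n m : in_AE n m -> 0 \notin m.2.
Proof. by move=> /allP nm; apply/negP => /nm. Qed.

Lemma in_AE_lift_mon n e m : in_AE n.+1 (lift_mon e m) = in_AE n m.
Proof.
apply/allP/allP => [nm s sm | nm [|s]]; rewrite ?mem_lift_mon_ext //.
  by rewrite -ltnS nm ?mem_lift_mon_ext.
exact: nm.
Qed.

Lemma in_AE_phi_mon n m : in_AE n.+1 m -> in_AE n (phi_mon m).
Proof.
by move=> nm; rewrite -(in_AE_lift_mon n (m.1 0)) phi_monK // (in_AE_ext0 nm).
Qed.

Definition M_mon (p i j : nat) : pred mon :=
  fun m => in_AE i m && (weight p m == p * j).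

Definition N_mon (p n k : nat) : pred mon :=
  fun m => in_AE n m && (weight p m <= p * k).

Section Weights.
Variable p : nat.
Hypothesis p_gt0 : 0 < p.

Lemma phi_mon_inj_M i j : {in M_mon p i j &, injective phi_mon}.
Proof.
move=> m1 m2 /andP[/in_AE_ext0 m1_0 /eqP w1] /andP[/in_AE_ext0 m2_0 /eqP w2].
move=> eq_phi.
rewrite -(phi_monK m1_0) -(phi_monK m2_0) eq_phi; congr lift_mon; apply/eqP.
rewrite -(eqn_add2r (weight p (phi_mon m2))) -(eqn_pmul2l p_gt0).
by rewrite -weight_phi_mon // -eq_phi -weight_phi_mon // w1 w2.
Qed.

Lemma phi_mon_M_N i j m : M_mon p i.+1 j m -> N_mon p i (j %/ p) (phi_mon m).
Proof.
move=> /andP[mi /eqP wm]; have phi_i := in_AE_phi_mon mi.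
apply/andP; split => //; set w := weight p (phi_mon m).
have w_le_j : w <= j.
  move: wm; rewrite weight_phi_mon ?(in_AE_ext0 mi) // => /eqP.
  by rewrite eqn_pmul2l // => /eqP <-; apply: leq_addl.
have p_dvd_w : p %| w by rewrite /w weight_phi_mon ?(in_AE_ext0 phi_i) ?dvdn_mulr.
by rewrite -(divnK p_dvd_w) mulnC leq_pmul2l // leq_div2r.
Qed.

Lemma lift_mon_N_M i j n :
  N_mon p i (j %/ p) n -> M_mon p i.+1 j (lift_mon (j - weight p n) n).
Proof.
move=> /andP[ni wn].
rewrite /M_mon in_AE_lift_mon ni weight_lift_mon subnK ?eqxx //.
by apply: leq_trans wn _; rewrite mulnC leq_trunc_div.
Qed.

End Weights.

Lemma phiE p (g : vspace p) : phi g = malg_map phi_mon g.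
Proof. by []. Qed.

Theorem mainTheorem13 (p : nat) (pp : prime p) (podd : odd p) (i j : nat) :
  (1 <= i)%N ->
  {in M_ p i j &, injective (@phi p)} /\
  (forall g, g \in M_ p i j -> phi g \in N_ p i.-1 (j %/ p)) /\
  (forall h, h \in N_ p i.-1 (j %/ p) -> exists2 g, g \in M_ p i j & phi g = h).
Proof.
case: i => [//|i _]; have p_gt0 := prime_gt0 pp.
split; [|split].
- move=> g1 g2; rewrite !unfold_in.
  have phi_mon_inj := phi_mon_inj_M p_gt0 (i := i.+1) (j := j).
  exact: (malg_map_inj_in (G := 'F_p) phi_mon_inj).
- by move=> g Mg; apply: all_msupp_malg_map => m /(allP Mg) /(phi_mon_M_N p_gt0).
- move=> h Nh; exists (malg_map (fun n => lift_mon (j - weight p n) n) h).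
    by apply: all_msupp_malg_map => n /(allP Nh) /lift_mon_N_M.
  by rewrite phiE malg_map_comp malg_map_id_in // => n _; apply: lift_monK.
Qed.
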